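(* Let $D$ be an instance all of whose tuples are endogenous, let $\mathcal{Q}$ be a monotone query, and let $\bar a\in\mathcal{Q}(D)$. Then $(D,\bar a)\in\mathcal{VSEFP}(\mathcal{Q})$ (i.e. there exists $D'\subseteq D$ with $\mathcal{Q}(D')=\mathcal{Q}(D)\smallsetminus\{\bar a\}$) if and only if $\mathit{vc\text{-}Causes}(D,\mathcal{Q}(\bar a))\neq\emptyset$.
   Context: A query $\mathcal{Q}$ is monotone if $D_1\subseteq D_2$ implies $\mathcal{Q}(D_1)\subseteq\mathcal{Q}(D_2)$; $D\models\mathcal{Q}(\bar b)$ means $\bar b\in\mathcal{Q}(D)$. Here $D^n=D$. Let $\mathcal{Q}(D)=\{\bar a_1,\dots,\bar a_n\}$ with $\bar a=\bar a_k$. A tuple $\tau\in D^n$ is a view-conditioned counterfactual cause for $\bar a_k$ in an instance $D''$ if $D''\smallsetminus\{\tau\}\not\models\mathcal{Q}(\bar a_k)$ and $D''\smallsetminus\{\tau\}\models\mathcal{Q}(\bar a_i)$ for all $i\neq k$ (where $\bar a_1,\dots,\bar a_n$ are the answers on the original $D$). $\tau$ is a view-conditioned cause for $\bar a_k$ if there is $\Gamma\subseteq D^n$ such that $\tau$ is a view-conditioned counterfactual cause for $\bar a_k$ in $D\smallsetminus\Gamma$. $\mathit{vc\text{-}Causes}(D,\mathcal{Q}(\bar a_k))$ is the set of view-conditioned causes. $\mathcal{VSEFP}(\mathcal{Q})=\{(D,\bar a): \bar a\in\mathcal{Q}(D) \text{ and there is } D'\subseteq D \text{ with } \mathcal{Q}(D)\smallsetminus\{\bar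 a\}=\mathcal{Q}(D')\}$. *)

From mathcomp Require Import all_boot.
Set Implicit Arguments. Unset Strict Implicit. Unset Printing Implicit Defensive.

Definition monotone (Tup Ans : finType) (Q : {set Tup} -> {set Ans}) : Prop :=
  forall D1 D2 : {set Tup}, D1 \subset D2 -> Q D1 \subset Q D2.

Definition vc_counterfactual_cause (Tup Ans : finType) (Q : {set Tup} -> {set Ans})
  (D D'' : {set Tup}) (a : Ans) (tau : Tup) : Prop :=
  a \notin Q (D'' :\ tau) /\
  (forall b, b \in Q D -> b != a -> b \in Q (D'' :\ tau)).

(* Endogenous tuples Dn: tau in Dn is a view-conditioned cause for a if there is
   Gamma subset of Dn with tau a vc-counterfactual cause in D \ Gamma. *)
Definition vc_cause (Tup Ans : finType) (Q : {set Tup} -> {set Ans})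
  (D Dn : {set Tup}) (a : Ans) (tau : Tup) : Prop :=
  tau \in Dn /\
  exists Gamma : {set Tup}, Gamma \subset Dn /\
    vc_counterfactual_cause Q D (D :\: Gamma) a tau.

Definition vc_Causes (Tup Ans : finType) (Q : {set Tup} -> {set Ans})
  (D Dn : {set Tup}) (a : Ans) : Tup -> Prop :=
  fun tau => vc_cause Q D Dn a tau.

Definition nonempty (T : Type) (S : T -> Prop) : Prop := exists x, S x.

Definition VSEFP (Tup Ans : finType) (Q : {set Tup} -> {set Ans})
  (D : {set Tup}) (a : Ans) : Prop :=
  a \in Q D /\ exists D' : {set Tup}, D' \subset D /\ Q D' = Q D :\ a.

From mathcomp Require Import all_boot.

(* A witness D' of VSEFP misses some tuple tau of D, since a is an answer on D
   but not on D'; taking Gamma := D \ (D' + tau) makes tau a vc-counterfactual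
   cause, because (D \ Gamma) \ tau = D'.  Conversely, for a cause tau with
   contingency Gamma, the instance D' := (D \ Gamma) \ tau keeps every other
   answer of D and, by monotonicity, no new ones. *)

Lemma setDDK (T : finType) (A B : {set T}) : B \subset A -> A :\: (A :\: B) = B.
Proof. by move=> sBA; rewrite setDDr setDv set0U; apply/setIidPr. Qed.

Section Causes.

Variables (Tup Ans : finType) (Q : {set Tup} -> {set Ans}).

Lemma vc_cause_of_subinstance (D D' : {set Tup}) (a : Ans) :
  D' \subset D -> a \in Q D -> Q D' = Q D :\ a -> nonempty (vc_Causes Q D D a).
Proof.
move=> sD'D aQD QD'.
have /properP[_ [tau tauD tauD']] : D' \proper D.
  rewrite properEneq sD'D andbT; apply: contraTneq aQD => <-.
  by rewrite QD' setD11.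
have sD'tD : tau |: D' \subset D by rewrite subUset sub1set tauD.
exists tau; split=> //; exists (D :\: (tau |: D')); split; first exact: subsetDl.
rewrite /vc_counterfactual_cause setDDK // setU1K // QD' setD11.
by split=> // b bQD ba; rewrite !inE ba.
Qed.

Lemma subinstance_of_vc_cause (D : {set Tup}) (a : Ans) (tau : Tup) :
  monotone Q -> vc_cause Q D D a tau ->
  exists2 D' : {set Tup}, D' \subset D & Q D' = Q D :\ a.
Proof.
move=> monoQ [_ [G [_ [aQ others]]]].
have sD : (D :\: G) :\ tau \subset D by rewrite setDDl subDset subsetUr.
exists ((D :\: G) :\ tau) => //; apply/setP => b; rewrite !inE.
have [->|ba] := eqVneq b a; first exact: negbTE.
by apply/idP/idP => [/(subsetP (monoQ _ _ sD))|/others]; apply.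
Qed.

End Causes.

Arguments subinstance_of_vc_cause {Tup Ans Q D a tau}.

(* All tuples endogenous: the endogenous set D^n is D itself. *)
Theorem proposition9 (Tup Ans : finType) (Q : {set Tup} -> {set Ans})
  (D : {set Tup}) (a : Ans) :
  monotone Q -> a \in Q D ->
  (VSEFP Q D a <-> nonempty (vc_Causes Q D D a)).
Proof.
move=> monoQ aQD; split.
- by move=> [_ [D' [sD'D QD']]]; apply: vc_cause_of_subinstance sD'D aQD QD'.
- move=> [tau /(subinstance_of_vc_cause monoQ) [D' sD'D QD']].
  by split=> //; exists D'.
Qed.
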